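(* Let $n,d,t$ be positive integers and let $N(n,d,t)$ be as in the context. (i) Let $d$ be composite and $\tilde e_d=\max\{e: e\mid d,\ 1<e<d\}$. If $t<\tilde e_d$, then $|N(n,d,t)|=0$ if $d\mid n$, and $|N(n,d,t)|=2^{d-t-1}-\sum_{e\mid d,\,1<e<d}|N(n,e,t)|$ if $d\nmid n$. If $t\ge\tilde e_d$, then $|N(n,d,t)|=0$ if $d\mid n$, or if $d\nmid n$ and $\mathrm{rank}(A)\ne\mathrm{rank}(B)$; and $|N(n,d,t)|=2^{d-\mathrm{rank}(A)}$ if $d\nmid n$ and $\mathrm{rank}(A)=\mathrm{rank}(B)$. (ii) Let $d$ be prime. Then $|N(n,d,t)|=0$ if $d\mid n$, or if $d\nmid n$ and $t\ge d$; $|N(n,d,t)|=2^{d-t-1}$ if $d\nmid n$ and $1\le t\le d-2$; and $|N(n,d,t)|=2$ if $d\nmid n$ and $t=d-1$.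
   Context: Sequences are binary (entries in $\mathbb{Z}_2$), $\overline{x}=x\oplus1$, $x\bmod d$ is the least nonnegative residue. A length-$m$ sequence is periodic if it is the concatenation of $m/e$ copies of a length-$e$ sequence for a proper divisor $e$ of $m$, aperiodic otherwise; $A(d)$ is the set of aperiodic binary sequences $\mathbf{s}_d=(s_0,\dots,s_{d-1})$ of length $d$. For $t>0$, $N(n,d,t)=\{\mathbf{s}_d\in A(d): \overline{s_{(n-1)\bmod d}}=s_{d-1},\ s_{(n-i)\bmod d}=s_{(d-i)\bmod d}\ (2\le i\le t),\ s_{(n-t-1)\bmod d}=\overline{s_{(d-t-1)\bmod d}}\}$. $A=(a_{i,j})$ is the $(t+1)\times d$ matrix over $\mathbb{Z}_2$ whose $i$-th row ($1\le i\le t+1$) has entries $1$ exactly in columns $((n-i)\bmod d)+1$ and $((d-i)\bmod d)+1$ and $0$ elsewhere, and $\mathbf{b}=(1,0,\dots,0,1)\in\mathbb{Z}_2^{t+1}$ (first and last entries $1$); thus the defining conditions on $\mathbf{s}_d$ read $A\mathbf{x}^T=\mathbf{b}^T$ with $\mathbf{x}=(s_0,\dots,s_{d-1})$. $B=(A\mid\mathbf{b}^T)$ is the augmented matrix, and ranks are over $\mathbb{Z}_2$. *)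

From mathcomp Require Import all_boot all_order all_algebra.

Import GRing.Theory Num.Theory.

Definition rmod (a : int) (d : nat) : nat := `|(a %% (d%:Z))%Z|%N.

(* (m - i) mod d, computed with INTEGER subtraction *)
Definition sidx (m i d : nat) : nat := rmod (m%:Z - i%:Z)%R d.

Definition periodic (m : nat) (s : m.-tuple bool) : bool :=
  [exists e : 'I_m, (0 < e)%N && (e %| m)%N &&
     [exists u : e.-tuple bool, val s == flatten (nseq (m %/ e) (val u))]].

Definition aperiodic (m : nat) (s : m.-tuple bool) : bool := ~~ periodic m s.

Definition condN (n d t : nat) (s : d.-tuple bool) : bool :=
  let x k := nth false s k in
  [&& ~~ x (sidx n 1 d) == x d.-1,
      [forall i : 'I_t.+1, (2 <= i)%N ==> (x (sidx n i d) == x (sidx d i d))]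
    & x (sidx n t.+1 d) == ~~ x (sidx d t.+1 d)].

Definition Nset (n d t : nat) : {set d.-tuple bool} :=
  [set s : d.-tuple bool | aperiodic d s && condN n d t s].

(* The (t+1) x d matrix A over Z_2 (rows/columns 0-indexed: row r is row i=r+1) *)
Definition Amx (n d t : nat) : 'M['F_2]_(t.+1, d) :=
  \matrix_(r < t.+1, j < d)
     (nat_of_bool ((j == sidx n r.+1 d :> nat) || (j == sidx d r.+1 d :> nat)))%:R%R.

Definition bvec (t : nat) : 'cV['F_2]_(t.+1) :=
  \col_(r < t.+1) (nat_of_bool ((r == 0 :> nat) || (r == t :> nat)))%:R%R.

Definition Bmx (n d t : nat) : 'M['F_2]_(t.+1, d + 1) := row_mx (Amx n d t) (bvec t).

Definition etilde (d : nat) : nat := \max_(e < d | (1 < e)%N && (e %| d)%N) e.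

(* Dropping aperiodicity, the conditions defining N(n,d,t) form the affine system
   A x = b over Z_2, so their solution set S(n,d,t) has 2^(d - rank A) elements when
   rank A = rank B and none otherwise.  Every solution has a least period e, a divisor
   of d, and is the (d/e)-fold repetition of an aperiodic solution of length e; period 1
   never occurs, since for e <= t the first e equations add up to 0 = 1.  Hence
   |S(n,d,t)| = |N(n,d,t)| + sum of |N(n,e,t)| over the divisors 1 < e < d, and that sum
   vanishes when etilde d <= t or d is prime.
   When t + 1 + gcd(n,d) <= d (e.g. t < etilde d and d does not divide n, as etilde d
   and gcd(n,d) are then at most d/2), the equations read s_k = s_(k+n mod d) + c_k for
   k >= d-t-1; every orbit of k |-> k+n mod d meets [0, d-t-1), so the first d-t-1
   entries are free and |S(n,d,t)| = 2^(d-t-1).  For d prime and t = d-1 the equation at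
   k = 0 is the sum of the others, which leaves |S(n,d,t)| = 2.  If d divides n, the
   first equation reads 0 = 1. *)

From mathcomp Require Import all_boot all_order all_algebra.
From mathcomp Require Import mxabelem zify ring.
Import GRing.Theory Num.Theory.

Set Implicit Arguments.
Unset Strict Implicit.

Lemma rmodE z d : (0 < d)%N -> ((rmod z d)%:Z = z %% d)%Z.
Proof. by move=> d0; rewrite /rmod gez0_abs // modz_ge0 //; lia. Qed.

Lemma rmod_lt z d : (0 < d)%N -> (rmod z d < d)%N.
Proof. by move=> d0; have := ltz_pmod z (d := Posz d); rewrite -rmodE //; lia. Qed.

Lemma sidx_lt m i d : (0 < d)%N -> (sidx m i d < d)%N.
Proof. exact: rmod_lt. Qed.

Lemma sidx_dvd m i d e : (0 < d)%N -> (0 < e)%N -> (e %| d)%N ->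
  (sidx m i d %% e)%N = sidx m i e.
Proof.
move=> d0 e0 /dvdnP[k dk]; rewrite /sidx; set z := (m%:Z - i%:Z)%R.
apply/eqP; rewrite -eqz_nat -modz_nat !rmodE //; apply/eqP.
by rewrite [in RHS](divz_eq z d) dk PoszM mulrA modzMDl.
Qed.

Lemma sidxE m i d : (0 < d)%N -> sidx m i d = ((m + (d - i %% d)) %% d)%N.
Proof.
move=> d0; apply/eqP; rewrite -eqz_nat rmodE // -modz_nat; apply/eqP.
have [eq_i lt_id] := (divn_eq i d, ltn_pmod i d0).
have -> : (m%:Z - i%:Z = - (i %/ d).+1%:Z * d%:Z + (m + (d - i %% d))%N%:Z)%R by lia.
by rewrite modzMDl.
Qed.

Lemma sidx_sub m i d : (0 < i <= d)%N -> sidx m i d = ((d - i + m) %% d)%N.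
Proof.
move=> /andP[i0 id]; rewrite sidxE; last lia.
case: (ltnP i d) => [lt_id|le_di]; first by rewrite (modn_small lt_id) addnC.
have -> : i = d by lia.
by rewrite modnn subn0 subnn add0n modnDr.
Qed.

Lemma sidx_id i d : (0 < i <= d)%N -> sidx d i d = (d - i)%N.
Proof. by move=> lt0id; rewrite sidx_sub // modnDr modn_small //; lia. Qed.

Lemma sidx_inj m d i j : (0 < i <= d)%N -> (0 < j <= d)%N ->
  sidx m i d = sidx m j d -> i = j.
Proof.
move=> lt0id lt0jd; rewrite !sidx_sub // => /eqP; rewrite eqn_modDr !modn_small; lia.
Qed.

Lemma sidx_modl m i d : (0 < d)%N -> (d %| m)%N -> sidx m i d = sidx d i d.
Proof. by move=> d0 dm; rewrite !sidxE // modnDl -modnDml (eqP dm). Qed.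

Lemma sidx_neq m i d : (0 < d)%N -> ~~ (d %| m)%N -> sidx m i d != sidx d i d.
Proof.
move=> d0 ndm; rewrite !sidxE // modnDl; apply: contra ndm => /eqP eq_mod.
by rewrite /dvdn -(mod0n d) -(eqn_modDr (d - i %% d)) eq_mod add0n.
Qed.

Definition bcoef (t r : nat) : bool := (r == 0)%N || (r == t).

Lemma condN_rows n d t (s : d.-tuple bool) : (0 < d)%N -> (0 < t)%N ->
  condN n d t s = [forall r : 'I_t.+1,
    nth false s (sidx n r.+1 d) (+) nth false s (sidx d r.+1 d) == bcoef t r].
Proof.
move=> d0 t0; rewrite /condN /bcoef; set x := nth false s.
have -> : d.-1 = sidx d 1 d by rewrite sidx_id; lia.
apply/idP/forallP.
- move=> /and3P[row0 /forallP rows rowt] r.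
  have [-> | r0] := posnP r; first by move: row0; rewrite /=; case: (x _); case: (x _).
  have [-> | rnt] := eqVneq (r : nat) t.
    by move: rowt; case: (x _); case: (x _).
  have := rows (inord r.+1); rewrite inordK; last by have := ltn_ord r; lia.
  by rewrite ltnS r0 => /eqP ->; rewrite addbb.
- move=> rows; apply/and3P; split.
  + by have := rows ord0; case: (x _); case: (x _).
  + apply/forallP => i; apply/implyP => i2; have ltit := ltn_ord i.
    have lt_it : (i.-1 < t.+1)%N by lia.
    have := rows (Ordinal lt_it); rewrite /= prednK; last lia.
    have -> : (i.-1 == 0) || (i.-1 == t) = false by apply/norP; split; apply/eqP; lia.
    by case: (x _); case: (x _).
  + by have := rows ord_max; rewrite /= eqxx orbT; case: (x _); case: (x _).
Qed.

Lemma big_addb_inj (I : finType) (x : I -> bool) (f g : I -> I) :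
  injective f -> injective g -> \big[addb/false]_i (x (f i) (+) x (g i)) = false.
Proof.
move=> f_inj g_inj; rewrite big_split /=.
by rewrite -(reindex_inj f_inj (P := xpredT)) -(reindex_inj g_inj (P := xpredT)) addbb.
Qed.

Lemma condN_dvd n d t (s : d.-tuple bool) : (0 < d)%N -> (0 < t)%N -> (d %| n)%N ->
  ~~ condN n d t s.
Proof.
move=> d0 t0 dn; rewrite condN_rows //; apply/forallPn; exists ord0.
by rewrite /= sidx_modl // addbb.
Qed.

Lemma condN_le n d t (s : d.-tuple bool) : (0 < d)%N -> (d <= t)%N -> ~~ condN n d t s.
Proof.
move=> d0 le_dt; rewrite condN_rows //; last exact: leq_trans le_dt.
apply/forallP => rows; set x := nth false s.
pose row (i : 'I_d) : 'I_t.+1 := widen_ord (leqW le_dt) i.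
have sidx_ord_inj m : injective (fun i : 'I_d => Ordinal (sidx_lt m i.+1 d0)).
  move=> i j /(congr1 val) /= /sidx_inj eq_ij; apply/val_inj/eq_add_S/eq_ij.
    by have := ltn_ord i; lia.
  by have := ltn_ord j; lia.
have := big_addb_inj (fun k : 'I_d => x k) (sidx_ord_inj n) (sidx_ord_inj d).
rewrite (eq_bigr (fun i : 'I_d => (i : nat) == 0%N)); last first.
  move=> i _; have /eqP -> := rows (row i); rewrite /bcoef /=.
  have -> : (i == t :> nat) = false by apply/eqP; have := ltn_ord i; lia.
  by rewrite orbF.
by rewrite (bigD1 (Ordinal d0)) //= big1 // => i /negbTE.
Qed.

Definition tabulate d (f : nat -> bool) : d.-tuple bool := [tuple f i | i < d].

Lemma nth_tabulate d f k : (k < d)%N -> nth false (tabulate d f) k = f k.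
Proof. by move=> kd; rewrite (nth_mktuple _ _ (Ordinal kd)). Qed.

Lemma eq_tuple_nth d (s1 s2 : d.-tuple bool) :
  (forall k, (k < d)%N -> nth false s1 k = nth false s2 k) -> s1 = s2.
Proof. by move=> eq_s; apply: eq_from_tnth => i; rewrite !(tnth_nth false) eq_s. Qed.

Definition shift_sys d r a (c : nat -> bool) (s : d.-tuple bool) : bool :=
  [forall k : 'I_d, (a <= k)%N ==> (nth false s k == nth false s ((k + r) %% d) (+) c k)].

Lemma card_vanishing_from d a : (a <= d)%N ->
  #|[set z : d.-tuple bool | [forall k : 'I_d, (a <= k)%N ==> ~~ nth false z k]]| = (2 ^ a)%N.
Proof.
move=> ad; pose pad (w : a.-tuple bool) : d.-tuple bool := tabulate d (nth false w).
have pad_inj : injective pad.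
  move=> w1 w2 /(congr1 (fun z : d.-tuple bool => nth false z)) eq_w.
  by apply: eq_tuple_nth => k ka; have := congr1 (@^~ k) eq_w; rewrite !nth_tabulate //; lia.
suff -> : [set z : d.-tuple bool | [forall k : 'I_d, (a <= k)%N ==> ~~ nth false z k]] =
          pad @: setT by rewrite card_imset // cardsT card_tuple card_bool.
apply/setP => z; rewrite inE; apply/forallP/imsetP.
- move=> z_tail; exists (tabulate a (nth false z)) => //.
  apply: eq_tuple_nth => k kd; rewrite nth_tabulate //.
  have [ka | ak] := ltnP k a; first by rewrite nth_tabulate.
  rewrite [RHS]nth_default ?size_tuple //.
  by have := z_tail (Ordinal kd); rewrite /= ak => /negbTE.
- move=> [w _ ->] k; apply/implyP => ak.
  by rewrite nth_tabulate // nth_default // size_tuple.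
Qed.

Lemma card_shift_sys d r a (c : nat -> bool) : (0 < d)%N -> (a <= d)%N ->
  (forall k, (k < d)%N -> exists m, ((k + m * r) %% d < a)%N) ->
  #|[set s : d.-tuple bool | shift_sys r a c s]| = (2 ^ a)%N.
Proof.
move=> d0 ad orbit_hits.
(* [F] maps the solutions onto the tuples vanishing from [a] on; it is injective
   because equality propagates back along the orbit of [k] until it drops below [a]. *)
pose F (s : d.-tuple bool) : d.-tuple bool := tabulate d (fun k =>
  if (a <= k)%N then nth false s k (+) nth false s ((k + r) %% d) (+) c k
  else nth false s k).
have nth_F s k : (k < d)%N -> nth false (F s) k =
    if (a <= k)%N then nth false s k (+) nth false s ((k + r) %% d) (+) c k
    else nth false s k.
  exact: nth_tabulate.
have F_inj : injective F.
  move=> s1 s2 eq_F; apply: eq_tuple_nth => k kd; have [m] := orbit_hits k kd.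
  elim: m k kd => [|m IHm] k kd hit; have := congr1 (fun z : d.-tuple bool => nth false z k) eq_F.
    by rewrite mul0n addn0 modn_small // in hit; rewrite !nth_F // leqNgt hit.
  rewrite !nth_F //; case: leqP => // _; rewrite (IHm ((k + r) %% d)) ?ltn_pmod //.
    by move/addIb/addIb.
  by rewrite modnDml -addnA -mulSn.
rewrite -(card_vanishing_from ad) -[in RHS](card_preimset _ F_inj); apply: eq_card => s.
rewrite !inE; apply: eq_forallb => k; rewrite nth_F //.
by case: leqP => //= _; case: (nth false s k); case: (nth false s _); case: (c k).
Qed.

Lemma shift_orbit_hits d r a k : (0 < d)%N -> (0 < r)%N -> (gcdn r d <= a)%N ->
  exists m, ((k + m * r) %% d < a)%N.
Proof.
move=> d0 r0 ga; set g := gcdn r d.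
have g0 : (0 < g)%N by rewrite gcdn_gt0 r0.
have [u v bezout _] := egcdnP d r0.
have [L eq_L] : exists L, (d %/ g = L.+1)%N.
  by exists (d %/ g).-1; rewrite prednK // divn_gt0 // dvdn_leq // dvdn_gcdr.
have eq_d : d = (L.+1 * g)%N by rewrite -eq_L divnK // dvdn_gcdr.
(* As [u * r = g] and [L * g = - g] modulo [d], this many steps take [k] to [k %% g]. *)
exists (u * (k %/ g) * L)%N.
have -> : (k + u * (k %/ g) * L * r = k %% g + (k %/ g + k %/ g * L * v) * d)%N.
  have -> : (u * (k %/ g) * L * r = k %/ g * L * (u * r))%N by ring.
  rewrite bezout -/g {1}(divn_eq k g); move: (k %/ g) (k %% g) => q rem.
  by rewrite eq_d; ring.
have g_le_d : (g <= d)%N by rewrite eq_d leq_pmull.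
rewrite addnC modnMDl modn_small; have := ltn_pmod k g0; lia.
Qed.

(* As [k |-> k + r] permutes the indices, the equations sum to [0 = \sum_k c k], so the
   one at [k = 0] follows from the others when the [c k] sum to [0]. *)
Lemma shift_sys_drop0 d r (c : nat -> bool) (s : d.-tuple bool) : (0 < d)%N ->
  \big[addb/false]_(k < d) c k = false -> shift_sys r 1 c s = shift_sys r 0 c s.
Proof.
move=> d0 even_c; apply/idP/idP => /forallP sys; apply/forallP => k; last first.
  by apply/implyP => _; apply: (implyP (sys k)).
apply/implyP => _; have [k0 | kpos] := posnP k; last exact: (implyP (sys k) kpos).
set x := nth false s; pose shift (i : 'I_d) : 'I_d := Ordinal (ltn_pmod (i + r) d0).
have shift_inj : injective shift.
  move=> i j /(congr1 val) /eqP; rewrite /= eqn_modDr !modn_small // => /eqP.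
  exact: val_inj.
have := big_addb_inj (fun i : 'I_d => x i) (@inj_id _) shift_inj.
rewrite (bigD1 (Ordinal d0)) //= (eq_bigr (fun i : 'I_d => c i)); last first.
  move=> i i0; have /implyP/(_ _)/eqP := sys i; rewrite -/x => ->; first by rewrite addbAC addbb.
  by rewrite lt0n.
move: even_c; rewrite (bigD1 (Ordinal d0)) //= k0 add0n.
by case: (x 0%N); case: (x _); case: (c 0%N); case: (\big[addb/false]_(i | _) _).
Qed.

Definition Sol n d t : {set d.-tuple bool} := [set s | condN n d t s].

(* Row [i] of the system is the equation at index [k = d - i]. *)
Lemma condN_shift_sys n d t (s : d.-tuple bool) : (0 < t)%N -> (t < d)%N ->
  condN n d t s = shift_sys n (d - t.+1) (fun k => bcoef t (d - k.+1)) s.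
Proof.
move=> t0 lt_td; rewrite condN_rows //; last lia.
set x := nth false s.
have row_eq i : (0 < i <= d)%N ->
    x (sidx n i d) (+) x (sidx d i d) = x (d - i)%N (+) x ((d - i + n) %% d).
  by move=> i_range; rewrite sidx_id // sidx_sub // addbC.
apply/forallP/forallP.
- move=> rows k; apply/implyP => le_k; have lt_kd := ltn_ord k.
  have lt_r : (d - k.+1 < t.+1)%N by lia.
  have := rows (Ordinal lt_r); rewrite /= -subSn // subSS row_eq; last lia.
  rewrite subKn -/x; last lia.
  by case: (x k); case: (x _); case: (bcoef _ _).
- move=> sys r; have lt_k : (d - r.+1 < d)%N by lia.
  have := implyP (sys (Ordinal lt_k)); rewrite /= row_eq; last by have := ltn_ord r; lia.
  have -> : (d - (d - r.+1).+1 = r)%N by have := ltn_ord r; lia.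
  rewrite leq_sub2l -/x // => /(_ isT).
  by case: (x _); case: (x _); case: (bcoef _ _).
Qed.

Lemma card_Sol n d t : (0 < n)%N -> (0 < t)%N -> (t.+1 + gcdn n d <= d)%N ->
  #|Sol n d t| = (2 ^ (d - t.+1))%N.
Proof.
move=> n0 t0 small_t.
have lt_td : (t < d)%N by apply: leq_trans small_t; rewrite addSn ltnS leq_addr.
have le_gcd : (gcdn n d <= d - t.+1)%N by rewrite leq_subRL.
have -> : Sol n d t = [set s | shift_sys n (d - t.+1) (fun k => bcoef t (d - k.+1)) s].
  by apply/setP => s; rewrite !inE condN_shift_sys.
have d0 := ltn_trans t0 lt_td.
by rewrite card_shift_sys ?leq_subr // => k _; apply: shift_orbit_hits; lia.
Qed.

Lemma card_Sol_full n d : (0 < n)%N -> (1 < d)%N -> coprime n d -> #|Sol n d d.-1| = 2%N.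
Proof.
move=> n0 d1 co_nd; have d0 : (0 < d)%N by lia.
have even_rhs : \big[addb/false]_(k < d) bcoef d.-1 (d - k.+1) = false.
  have lt_d1 : (d.-1 < d)%N by lia.
  rewrite (bigD1 (Ordinal d0)) // (bigD1 (Ordinal lt_d1)) -?val_eqE /=; last lia.
  rewrite big1 => [|k]; first by rewrite /bcoef subn1 prednK // subnn eqxx; lia.
  rewrite -!val_eqE /bcoef /= => /andP[k0 kd1]; have := ltn_ord k.
  by apply/contraTF => /orP[] /eqP; lia.
have -> : Sol n d d.-1 = [set s | shift_sys n 1 (fun k => bcoef d.-1 (d - k.+1)) s].
  apply/setP => s; rewrite !inE condN_shift_sys; try lia.
  by rewrite prednK // subnn shift_sys_drop0.
rewrite card_shift_sys // => k _; apply: shift_orbit_hits => //.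
by rewrite (eqP co_nd).
Qed.

Definition has_period T (Y : nat -> T) f := forall j, Y (j + f) = Y j.

Lemma has_periodM T (Y : nat -> T) f k : has_period Y f -> has_period Y (k * f).
Proof. by move=> Yf; elim: k => [|k IHk] j; rewrite ?addn0 // mulSn addnA IHk Yf. Qed.

Lemma has_period_mod T (Y : nat -> T) f j : has_period Y f -> Y j = Y (j %% f).
Proof. by move=> Yf; rewrite {1}(divn_eq j f) addnC has_periodM. Qed.

Lemma has_period_gcd T (Y : nat -> T) f g : (0 < f)%N -> has_period Y f -> has_period Y g ->
  has_period Y (gcdn f g).
Proof.
move=> f0 Yf Yg j; have [u v bezout _] := egcdnP g f0.
rewrite -(has_periodM v Yg (j + _)) -addnA (addnC (gcdn f g)) -bezout.
exact: has_periodM.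
Qed.

Definition ext d (s : d.-tuple bool) j := nth false s (j %% d).

Lemma ext_period d (s : d.-tuple bool) : has_period (ext s) d.
Proof. by move=> j; rewrite /ext modnDr. Qed.

Definition periodb d (s : d.-tuple bool) f :=
  [forall j : 'I_d, nth false s ((j + f) %% d) == nth false s j].

Lemma periodbP d (s : d.-tuple bool) f : (0 < d)%N ->
  reflect (has_period (ext s) f) (periodb s f).
Proof.
move=> d0; apply: (iffP forallP) => [per j | per j].
  by rewrite /ext -modnDml; have /eqP := per (Ordinal (ltn_pmod j d0)).
by have := per j; rewrite /ext (modn_small (ltn_ord j)) => ->.
Qed.

Lemma exists_period d (s : d.-tuple bool) : exists f, (0 < f)%N && periodb s f.
Proof.
case: d s => [|d] s; first by exists 1%N; apply/forallP => -[].
by exists d.+1; apply/periodbP => //; apply: ext_period.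
Qed.

Definition min_period d (s : d.-tuple bool) := ex_minn (exists_period s).

Lemma min_periodP d (s : d.-tuple bool) : (0 < d)%N ->
  [/\ 0 < min_period s, has_period (ext s) (min_period s)
    & forall f, 0 < f -> has_period (ext s) f -> min_period s <= f]%N.
Proof.
rewrite /min_period => d0; case: ex_minnP => m /andP[m0 /(periodbP _ _ d0) per] min_m.
by split=> // f f0 /(periodbP _ _ d0) per_f; apply: min_m; rewrite f0.
Qed.

Lemma min_period_dvd d (s : d.-tuple bool) f : (0 < d)%N -> (0 < f)%N ->
  has_period (ext s) f -> (min_period s %| f)%N.
Proof.
move=> d0 f0 per_f; have [m0 per_m min_m] := min_periodP s d0.
have gcd0 : (0 < gcdn (min_period s) f)%N by rewrite gcdn_gt0 m0.
have le_m := min_m _ gcd0 (has_period_gcd m0 per_m per_f).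
have/eqP <- : gcdn (min_period s) f == min_period s.
  by rewrite eqn_leq le_m dvdn_leq // dvdn_gcdl.
exact: dvdn_gcdr.
Qed.

Lemma size_flatten_nseq T (u : seq T) k : size (flatten (nseq k u)) = (k * size u)%N.
Proof. by elim: k => //= k IHk; rewrite size_cat IHk mulSn. Qed.

Lemma nth_flatten_nseq T (x0 : T) (u : seq T) k j : (j < k * size u)%N ->
  nth x0 (flatten (nseq k u)) j = nth x0 u (j %% size u).
Proof.
elim: k j => [|k IHk] j //=; rewrite mulSn nth_cat => lt_j.
case: ltnP => [lt_ju | le_uj]; first by rewrite modn_small.
by rewrite IHk; [rewrite -{2}(subnK le_uj) modnDr | lia].
Qed.

Lemma periodicE d (s : d.-tuple bool) : (0 < d)%N ->
  periodic d s = [exists e : 'I_d, (0 < e)%N && (e %| d)%N && periodb s e].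
Proof.
move=> d0; apply/existsP/existsP => -[e /andP[/andP[e0 e_dvd] per]]; exists e.
  rewrite e0 e_dvd; move: per => /existsP[u /eqP s_rep]; apply/(periodbP _ _ d0).
  have ext_s j : ext s j = nth false u (j %% e).
    rewrite /ext s_rep nth_flatten_nseq size_tuple ?modn_dvdm //.
    by rewrite divnK // ltn_pmod.
  by move=> j; rewrite !ext_s -modnDmr modnn addn0.
rewrite e0 e_dvd; apply/existsP; exists (tabulate e (nth false s)); apply/eqP.
apply: (@eq_from_nth _ false); first by rewrite size_flatten_nseq !size_tuple divnK.
move=> k; rewrite size_tuple => lt_kd.
rewrite nth_flatten_nseq size_tuple ?divnK // nth_tabulate ?ltn_pmod //.
have := has_period_mod k (periodbP _ _ d0 per); rewrite /ext (modn_small lt_kd) => ->.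
by rewrite modn_small // (leq_trans (ltn_pmod k e0)) // dvdn_leq.
Qed.

Lemma aperiodicE d (s : d.-tuple bool) : (0 < d)%N -> aperiodic d s = (min_period s == d).
Proof.
move=> d0; have [m0 per_m min_m] := min_periodP s d0.
have m_dvd := min_period_dvd d0 d0 (ext_period s).
rewrite /aperiodic periodicE //; apply/existsPn/eqP => [no_per | m_d e].
  apply/eqP; rewrite eqn_leq dvdn_leq //= leqNgt; apply/negP => m_lt.
  by have := no_per (Ordinal m_lt); rewrite /= m0 m_dvd; move/(periodbP _ _ d0).
apply/negP => /andP[/andP[e0 _] /(periodbP _ _ d0) per_e].
by have := min_m _ e0 per_e; rewrite m_d leqNgt ltn_ord.
Qed.

Definition rep d e (u : e.-tuple bool) : d.-tuple bool :=
  tabulate d (fun k => nth false u (k %% e)).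

Lemma ext_rep d e (u : e.-tuple bool) : (0 < d)%N -> (e %| d)%N -> ext (rep d u) =1 ext u.
Proof. by move=> d0 e_dvd j; rewrite /ext /rep nth_tabulate ?ltn_pmod // modn_dvdm. Qed.

Lemma min_period_rep d e (u : e.-tuple bool) : (0 < d)%N -> (0 < e)%N -> (e %| d)%N ->
  min_period (rep d u) = min_period u.
Proof.
move=> d0 e0 e_dvd; apply: eq_ex_minn => f; congr (_ && _).
apply/(periodbP _ _ d0)/(periodbP _ _ e0) => per j; last by rewrite !ext_rep.
by rewrite -!(ext_rep _ d0 e_dvd).
Qed.

Lemma rep_inj d e : (e <= d)%N -> injective (@rep d e).
Proof.
move=> le_ed u1 u2 /(congr1 (fun s : d.-tuple bool => nth false s)) eq_rep.
apply: eq_tuple_nth => k lt_ke.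
by have := congr1 (@^~ k) eq_rep; rewrite /rep !nth_tabulate ?modn_small //; lia.
Qed.

Lemma rep_tabulate d e (s : d.-tuple bool) : (0 < d)%N -> (0 < e)%N -> (e %| d)%N ->
  has_period (ext s) e -> s = rep d (tabulate e (nth false s)).
Proof.
move=> d0 e0 e_dvd per; apply: eq_tuple_nth => k lt_kd.
have lt_ke : (k %% e < d)%N by rewrite (leq_trans (ltn_pmod k e0)) // dvdn_leq.
rewrite /rep !nth_tabulate ?ltn_pmod //.
by have := has_period_mod k per; rewrite /ext (modn_small lt_kd) (modn_small lt_ke).
Qed.

Lemma condN_rep n d e t (u : e.-tuple bool) : (0 < d)%N -> (0 < e)%N -> (e %| d)%N ->
  condN n d t (rep d u) = condN n e t u.
Proof.
move=> d0 e0 e_dvd.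
have nth_rep m i : nth false (rep d u) (sidx m i d) = nth false u (sidx m i e).
  by rewrite /rep nth_tabulate ?sidx_lt // sidx_dvd.
rewrite /condN; have -> : d.-1 = sidx d 1 d by rewrite sidx_id; lia.
have -> : e.-1 = sidx e 1 e by rewrite sidx_id; lia.
rewrite !nth_rep !(sidx_modl _ e0 e_dvd); congr (_ && (_ && _)).
by apply: eq_forallb => i; rewrite !nth_rep (sidx_modl _ e0 e_dvd).
Qed.

Lemma card_condN_min_period n d t e : (0 < d)%N -> (0 < t)%N ->
  #|[set s : d.-tuple bool | condN n d t s && (min_period s == e)]| =
  if (1 < e)%N && (e %| d)%N then #|Nset n e t| else 0%N.
Proof.
move=> d0 t0; case: ifP => [/andP[e1 e_dvd] | not_div].
  have e0 : (0 < e)%N by lia.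
  rewrite -(card_imset _ (rep_inj (dvdn_leq d0 e_dvd))); apply: eq_card => s; rewrite !inE.
  apply/andP/imsetP => [[cond /eqP me] | [u]].
    have [_ per _] := min_periodP s d0; rewrite me in per.
    have s_rep := rep_tabulate d0 e0 e_dvd per.
    exists (tabulate e (nth false s)) => //; rewrite inE aperiodicE //.
    rewrite -(min_period_rep _ d0 e0 e_dvd) -(condN_rep _ _ _ d0 e0 e_dvd) -s_rep.
    by rewrite me cond eqxx.
  rewrite inE aperiodicE // => /andP[/eqP me cond] ->.
  by rewrite condN_rep // min_period_rep // me.
apply: eq_card0 => s; rewrite !inE; apply/negP => /andP[cond /eqP me].
have [m0 per _] := min_periodP s d0.
have m_dvd := min_period_dvd d0 d0 (ext_period s); rewrite me in m0 per m_dvd.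
have e1 : e = 1%N by move: not_div; rewrite m_dvd andbT; lia.
move: cond; rewrite (rep_tabulate d0 m0 m_dvd per) condN_rep //.
by apply/negP/condN_le; rewrite e1.
Qed.

Lemma card_Sol_decomp n d t : (1 < d)%N -> (0 < t)%N ->
  #|Sol n d t| = (#|Nset n d t| + \sum_(e < d | (1 < e) && (e %| d)) #|Nset n e t|)%N.
Proof.
move=> d1 t0; have d0 : (0 < d)%N by lia.
rewrite -sum1_card (partition_big (fun s => inord (min_period s) : 'I_d.+1) xpredT) //=.
rewrite (eq_bigr (fun e : 'I_d.+1 => if (1 < e) && (e %| d) then #|Nset n e t| else 0))%N.
  by rewrite big_ord_recr /= d1 dvdnn addnC [in RHS]big_mkcond.
move=> e _; rewrite -card_condN_min_period // sum1dep_card; apply: eq_card => s.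
have [m0 _ _] := min_periodP s d0.
have le_md := dvdn_leq d0 (min_period_dvd d0 d0 (ext_period s)).
by rewrite !inE -val_eqE /= inordK.
Qed.

Section AffineSystems.

Variable F : finFieldType.
Local Open Scope ring_scope.

Lemma card_affine_solutions m k (A : 'M[F]_(m, k)) (b : 'rV[F]_k) :
  #|[set v : 'rV[F]_m | v *m A == b]| =
  if (b <= A)%MS then (#|F| ^ (m - \rank A))%N else 0%N.
Proof.
case: ifP => [/submxP[v0 ->] | b_notin].
  have -> : [set v : 'rV[F]_m | v *m A == v0 *m A] = [set w + v0 | w in rowg (kermx A)].
    apply/setP => v; rewrite inE; apply/eqP/imsetP => [eq_v | [w]].
      by exists (v - v0); rewrite ?subrK // inE sub_kermx mulmxBl eq_v subrr.
    by rewrite inE sub_kermx => /eqP w_ker ->; rewrite mulmxDl w_ker add0r.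
  by rewrite card_imset; [rewrite card_rowg mxrank_ker | apply: addIr].
apply: eq_card0 => v; rewrite !inE.
by apply: contraFF b_notin => /eqP <-; apply: submxMl.
Qed.

Lemma rank_row_mx_col m k (A : 'M[F]_(m, k)) (b : 'cV[F]_m) :
  (\rank A == \rank (row_mx A b)) = (b^T <= A^T)%MS.
Proof.
rewrite -mxrank_tr -[\rank (row_mx _ _)]mxrank_tr tr_row_mx -addsmxE.
by rewrite (mxrank_leqif_sup (addsmxSl _ _)).2 addsmx_sub submx_refl.
Qed.

End AffineSystems.

Section BinaryVectors.

Local Open Scope ring_scope.

Lemma natrF2_addb (p q : bool) : p%:R + q%:R = (p (+) q)%:R :> 'F_2.
Proof. by case: p; case: q; apply: val_inj. Qed.

Lemma natrF2_andb (p q : bool) : p%:R * q%:R = (p && q)%:R :> 'F_2.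
Proof. by case: p; case: q; apply: val_inj. Qed.

Lemma natrF2_inj (p q : bool) : (p%:R == q%:R :> 'F_2) = (p == q).
Proof. by case: p; case: q. Qed.

Lemma F2_natr_eq1 (x : 'F_2) : x = (x == 1)%:R.
Proof. by case: x => [[|[|k]] //=] ?; apply: val_inj. Qed.

Definition rowvec d (s : d.-tuple bool) : 'rV['F_2]_d := \row_j (nth false s j)%:R.

Lemma rowvec_inj d : injective (@rowvec d).
Proof.
move=> s1 s2 eq_v; apply: eq_tuple_nth => k lt_kd.
by have /eqP := congr1 (fun v : 'rV_d => v 0 (Ordinal lt_kd)) eq_v; rewrite !mxE natrF2_inj => /eqP.
Qed.

Lemma rowvec_surj d (v : 'rV['F_2]_d) : v = rowvec [tuple v 0 j == 1 | j < d].
Proof. by apply/rowP => j; rewrite mxE nth_mktuple -F2_natr_eq1. Qed.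

Lemma condN_mx n d t (s : d.-tuple bool) : (0 < d)%N -> (0 < t)%N -> ~~ (d %| n)%N ->
  condN n d t s = (rowvec s *m (Amx n d t)^T == (bvec t)^T).
Proof.
move=> d0 t0 ndn; rewrite condN_rows //; set x := nth false s.
have row_r r : (rowvec s *m (Amx n d t)^T) 0 r =
    (x (sidx n r.+1 d) (+) x (sidx d r.+1 d))%:R.
  rewrite !mxE; under eq_bigr do rewrite !mxE natrF2_andb.
  pose jn : 'I_d := Ordinal (sidx_lt n r.+1 d0).
  pose jd : 'I_d := Ordinal (sidx_lt d r.+1 d0).
  have jn_jd : jn != jd by rewrite -val_eqE /= sidx_neq.
  rewrite (bigD1 jn) //= (bigD1 jd) 1?eq_sym //= big1 => [|j /andP[j_n j_d]].
    by rewrite !eqxx orbT !andbT addr0 natrF2_addb.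
  by rewrite -!val_eqE /= in j_n j_d; rewrite (negbTE j_n) (negbTE j_d) andbF.
apply/forallP/eqP => [rows | /rowP eq_row r].
  by apply/rowP => r; rewrite row_r !mxE; have /eqP -> := rows r.
by have := eq_row r; rewrite row_r !mxE => /eqP; rewrite natrF2_inj.
Qed.

Lemma card_Sol_rank n d t : (0 < d)%N -> (0 < t)%N -> ~~ (d %| n)%N ->
  #|Sol n d t| = if \rank (Amx n d t) == \rank (Bmx n d t)
                 then (2 ^ (d - \rank (Amx n d t)))%N else 0%N.
Proof.
move=> d0 t0 ndn; rewrite -(card_imset _ (@rowvec_inj d)).
have -> : @rowvec d @: Sol n d t = [set v | v *m (Amx n d t)^T == (bvec t)^T].
  apply/setP => v; rewrite inE; apply/imsetP/idP => [[s] | sol_v].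
    by rewrite inE condN_mx // => ? ->.
  exists [tuple v 0 j == 1 | j < d]; last exact: rowvec_surj.
  by rewrite inE condN_mx // -rowvec_surj.
by rewrite card_affine_solutions card_Fp // -rank_row_mx_col mxrank_tr.
Qed.

End BinaryVectors.

Lemma card_Nset_eq0 n d t : (forall s : d.-tuple bool, ~~ condN n d t s) -> #|Nset n d t| = 0%N.
Proof.
by move=> no_sol; apply: eq_card0 => s; rewrite inE (negbTE (no_sol s)) andbF.
Qed.

Lemma sum_Nset_eq0 n d t : (forall e : 'I_d, (1 < e)%N -> (e %| d)%N -> (e <= t)%N) ->
  (\sum_(e < d | (1 < e) && (e %| d)) #|Nset n e t|)%N = 0%N.
Proof.
move=> small_divisors; apply: big1 => e /andP[e1 e_dvd]; apply: card_Nset_eq0 => s.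
by apply: condN_le; [lia | apply: small_divisors].
Qed.

Lemma proper_divisor_le_half d e : (0 < d)%N -> (e %| d)%N -> (e < d)%N -> (2 * e <= d)%N.
Proof.
move=> d0 /dvdnP[k ->] lt_e; rewrite leq_mul2r; apply/orP; right.
by move: d0 lt_e; case: k => [|[|k]] //; rewrite mul1n ltnn.
Qed.

Lemma etilde_le_half d : (0 < d)%N -> (2 * etilde d <= d)%N.
Proof.
move=> d0; have : (etilde d <= d %/ 2)%N.
  apply/bigmax_leqP => e /andP[_ e_dvd].
  by rewrite leq_divRL // mulnC proper_divisor_le_half.
by rewrite leq_divRL // mulnC.
Qed.

Lemma gcdn_le_half n d : (0 < d)%N -> ~~ (d %| n)%N -> (2 * gcdn n d <= d)%N.
Proof.
move=> d0 ndn; apply: proper_divisor_le_half (dvdn_gcdr n d) _ => //.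
rewrite -gcdn_modl; have mod0 : (0 < n %% d)%N by rewrite lt0n.
by rewrite (leq_ltn_trans (dvdn_leq mod0 (dvdn_gcdl _ _))) ?ltn_pmod.
Qed.

Lemma divisor_le_etilde d (e : 'I_d) : (1 < e)%N -> (e %| d)%N -> (e <= etilde d)%N.
Proof.
move=> e1 e_dvd; rewrite /etilde.
by apply: (@leq_bigmax_cond _ (fun e : 'I_d => (1 < e) && (e %| d))%N); rewrite e1.
Qed.

Theorem lemma11 (n d t : nat) :
  (0 < n)%N -> (0 < d)%N -> (0 < t)%N ->
  (* (i) d composite *)
  (((1 < d)%N /\ ~~ prime d) ->
     ((t < etilde d)%N ->
        ((d %| n)%N -> #|Nset n d t| = 0%N) /\
        (~~ (d %| n)%N ->
           (#|Nset n d t|%:Z =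
              (2 ^ (d - t - 1))%:Z
              - (\sum_(e < d | (1 < e)%N && (e %| d)%N) #|Nset n e t|)%:Z)%R)) /\
     ((etilde d <= t)%N ->
        ((d %| n)%N -> #|Nset n d t| = 0%N) /\
        (~~ (d %| n)%N -> \rank (Amx n d t) != \rank (Bmx n d t) ->
           #|Nset n d t| = 0%N) /\
        (~~ (d %| n)%N -> \rank (Amx n d t) = \rank (Bmx n d t) ->
           #|Nset n d t| = (2 ^ (d - \rank (Amx n d t)))%N))) /\
  (* (ii) d prime *)
  (prime d ->
     ((d %| n)%N -> #|Nset n d t| = 0%N) /\
     (~~ (d %| n)%N -> (d <= t)%N -> #|Nset n d t| = 0%N) /\
     (~~ (d %| n)%N -> (1 <= t <= d - 2)%N -> #|Nset n d t| = (2 ^ (d - t - 1))%N) /\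
     (~~ (d %| n)%N -> t = (d - 1)%N -> #|Nset n d t| = 2%N)).
Proof.
move=> n0 d0 t0; rewrite -subnDA addn1.
have N_dvd : (d %| n)%N -> #|Nset n d t| = 0%N.
  by move=> dn; apply: card_Nset_eq0 => s; apply: condN_dvd.
split=> [[d1 _] | d_prime].
  split=> [lt_te | le_et].
    split=> // ndn; have small_t : (t.+1 + gcdn n d <= d)%N.
      by have := etilde_le_half d0; have := gcdn_le_half d0 ndn; lia.
    by rewrite -(card_Sol n0 t0 small_t) (card_Sol_decomp n d1 t0) PoszD addrK.
  have no_parts : (\sum_(e < d | (1 < e) && (e %| d)) #|Nset n e t|)%N = 0%N.
    by apply: sum_Nset_eq0 => e e1 e_dvd; apply: leq_trans (divisor_le_etilde e1 e_dvd) le_et.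
  have N_Sol : #|Nset n d t| = #|Sol n d t| by rewrite card_Sol_decomp // no_parts addn0.
  split=> //; split=> ndn; rewrite N_Sol card_Sol_rank //.
    by move=> /negbTE ->.
  by move=> ->; rewrite eqxx.
have d1 := prime_gt1 d_prime.
have co_nd : ~~ (d %| n)%N -> coprime n d by rewrite coprime_sym prime_coprime.
have no_parts : (\sum_(e < d | (1 < e) && (e %| d)) #|Nset n e t|)%N = 0%N.
  apply: sum_Nset_eq0 => e e1 e_dvd; have := ltn_ord e.
  by case/primeP: d_prime => _ /(_ e e_dvd) /orP[] /eqP; lia.
have N_Sol : #|Nset n d t| = #|Sol n d t| by rewrite card_Sol_decomp // no_parts addn0.
split=> //; split=> [ndn le_dt | ]; first by apply: card_Nset_eq0 => s; apply: condN_le.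
split=> ndn; rewrite N_Sol.
  by case/andP=> _ le_td; rewrite card_Sol // (eqP (co_nd ndn)); lia.
by move=> ->; rewrite subn1 card_Sol_full // co_nd.
Qed.
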